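(* Let $R$ be a left noetherian domain and let $A=\sigma(R)\langle x_1,\dots,x_n\rangle$ be a bijective skew PBW extension of $R$. (i) The algebraic subsets of $R^n$ are the closed sets of a topology on $R^n$ (the Zariski topology); that is, $\emptyset$ and $R^n$ are algebraic, the union of two algebraic sets is algebraic, and the intersection of any family of algebraic sets is algebraic. (ii) Every finite subset $X\subseteq R^n$ is algebraic, hence closed in this topology.
   Context: Skew PBW extension: a ring $A$ is a skew PBW extension of a ring $R$, written $A=\sigma(R)\langle x_1,\dots,x_n\rangle$, if (1) $R\subseteq A$ is a subring; (2) there are $x_1,\dots,x_n\in A$ such that $A$ is a free left $R$-module with basis $\mathrm{Mon}(A)=\{x^\alpha=x_1^{\alpha_1}\cdots x_n^{\alpha_n}:\alpha\in\mathbb N^n\}$; (3) for every $i$ and every $r\in R\setminus\{0\}$ there is $c_{i,r}\in R\setminus\{0\}$ with $x_ir-c_{i,r}x_i\in R$; (4) for every $i,j$ there is $c_{i,j}\in R\setminus\{0\}$ with $x_jx_i-c_{i,j}x_ix_j\in R+Rx_1+\cdots+Rx_n$. For each $i$ there are then an injective ring endomorphism $\sigma_i$ of $R$ and a $\sigma_i$-derivation $\delta_i$ of $R$ with $x_ir=\sigma_i(r)x_i+\delta_i(r)$ for all $r\in R$. $A$ is bijective if every $\sigma_i$ is bijective and every $c_{i,j}$ is invertible. Under these hypotheses $A$ is a left noetherian domain. Roots and vanishing sets: for $Z=(z_1,\dots,z_n)\in R^n$, $\langle Z\rangle$ denotes the two-sided ideal of $A$ generated by $x_1-z_1,\dots,x_n-z_n$.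 $Z$ is a root of $f\in A$, written $f(Z)=0$, iff $f\in\langle Z\rangle$. For $f\in A$, $V(f)=\{Z\in R^n: f(Z)=0\}$. Algebraic sets: a subset $X\subseteq R^n$ is algebraic if either $X=R^n$ or there exists $0\neq g\in A$ with $X\subseteq V(g)$. *)

From HB Require Import structures.
From mathcomp Require Import all_boot all_order all_algebra.
Set Implicit Arguments. Unset Strict Implicit. Unset Printing Implicit Defensive.
Import GRing.Theory.
Local Open Scope ring_scope.

(* R is a domain: no zero divisors (nontriviality 1 != 0 is built into nzRingType). *)
Definition is_domain (R : nzRingType) : Prop :=
  forall a b : R, a * b = 0 -> a = 0 \/ b = 0.

Definition is_left_ideal (R : nzRingType) (I : R -> Prop) : Prop :=
  [/\ I 0, (forall a b, I a -> I b -> I (a + b)) & (forall r a, I a -> I (r * a))].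

Definition left_noetherian (R : nzRingType) : Prop :=
  forall I : nat -> R -> Prop,
    (forall k, is_left_ideal (I k)) ->
    (forall k a, I k a -> I k.+1 a) ->
    exists N, forall m, (N <= m)%N -> forall a, I m a -> I N a.

Definition is_unit_elt (R : nzRingType) (c : R) : Prop :=
  exists c', c * c' = 1 /\ c' * c = 1.

(* R is identified with its image under the injective ring morphism phi : R -> A. *)

Definition monomial (A : nzRingType) (n : nat) (x : 'I_n -> A)
  (alpha : {ffun 'I_n -> nat}) : A :=
  \prod_(i < n) x i ^+ alpha i.

Definition skew_PBW (R A : nzRingType) (phi : {rmorphism R -> A}) (n : nat)
  (x : 'I_n -> A) : Prop :=
  [/\ (* (1) R is a subring of A *)
      injective phi,
      (forall a : A, exists (s : seq {ffun 'I_n -> nat}) (c : {ffun 'I_n -> nat} -> R),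
          a = \sum_(al <- s) phi (c al) * monomial x al),
      (forall (s : seq {ffun 'I_n -> nat}) (c : {ffun 'I_n -> nat} -> R),
          uniq s -> \sum_(al <- s) phi (c al) * monomial x al = 0 ->
          forall al, al \in s -> c al = 0),
      (forall (i : 'I_n) (r : R), r != 0 ->
          exists c : R, c != 0 /\ exists d : R, x i * phi r - phi c * x i = phi d)
    &
      (forall i j : 'I_n, exists c : R, c != 0 /\
          exists (d0 : R) (d : 'I_n -> R),
            x j * x i - phi c * x i * x j = phi d0 + \sum_(k < n) phi (d k) * x k)].

(* Bijectivity: every sigma_i is surjective (it is automatically injective),
   where x_i r = sigma_i(r) x_i + delta_i(r); i.e. for every s there is r with
   x_i r - s x_i in R.  And every c_{i,j} (uniquely determined) is invertible. *)
Definition bijective_skew_PBW (R A : nzRingType) (phi : {rmorphism R -> A}) (n : nat)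
  (x : 'I_n -> A) : Prop :=
  [/\ skew_PBW phi x,
      (forall (i : 'I_n) (s : R), exists r d : R, x i * phi r - phi s * x i = phi d)
    & (forall i j : 'I_n, exists c : R, is_unit_elt c /\
          exists (d0 : R) (d : 'I_n -> R),
            x j * x i - phi c * x i * x j = phi d0 + \sum_(k < n) phi (d k) * x k)].

(* membership in the two-sided ideal <Z> generated by x_1 - z_1, ..., x_n - z_n *)
Definition in_ideal_pt (R A : nzRingType) (phi : {rmorphism R -> A}) (n : nat)
  (x : 'I_n -> A) (Z : 'I_n -> R) (f : A) : Prop :=
  exists s : seq ('I_n * A * A),
    f = \sum_(t <- s) t.1.2 * (x t.1.1 - phi (Z t.1.1)) * t.2.

Definition is_root_pt (R A : nzRingType) (phi : {rmorphism R -> A}) (n : nat)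
  (x : 'I_n -> A) (f : A) (Z : 'I_n -> R) : Prop :=
  in_ideal_pt phi x Z f.

Definition Vset (R A : nzRingType) (phi : {rmorphism R -> A}) (n : nat)
  (x : 'I_n -> A) (f : A) : ('I_n -> R) -> Prop :=
  fun Z => is_root_pt phi x f Z.

Definition algebraic (R A : nzRingType) (phi : {rmorphism R -> A}) (n : nat)
  (x : 'I_n -> A) (X : ('I_n -> R) -> Prop) : Prop :=
  (forall Z, X Z) \/ exists g : A, g != 0 /\ forall Z, X Z -> Vset phi x g Z.

From Stdlib Require List.
Definition finite_pts (R : nzRingType) (n : nat) (X : ('I_n -> R) -> Prop) : Prop :=
  exists s : seq ('I_n -> R), forall Z, X Z <-> List.In Z s.

(* The algebraic sets are closed under arbitrary intersections (an intersection
   lies in V(g) for any g witnessing one of its members) and contain the empty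
   set and R^n.  Closure under finite unions needs V(g1) U V(g2) <= V(g1 g2) with
   g1 g2 != 0, i.e. that A is a domain whenever R is; finite sets are then finite
   unions of points, and a point Z lies in V(x_1 - z_1) (for n = 0, R^n is itself
   a point).

   Elements are handled as left R-combinations of products of words in the x_i;
   the sorted words are the standard monomials, a left R-basis.  Using the
   commutation rules (3) and (4) we show that, modulo terms of lower degree,
   a scalar can be moved left across a word and any word is a nonzero multiple of
   its sorted rearrangement.  With the degree-lexicographic order on words this
   gives: every nonzero element has a leading term, an element with a leading
   term is nonzero, and the leading term of a product is (a nonzero multiple of)
   the sorted concatenation of the leading words. *)

From mathcomp Require Import all_boot all_order all_algebra.
From Stdlib Require Import Classical FunctionalExtensionality.
Set Implicit Arguments. Unset Strict Implicit. Unset Printing Implicit Defensive.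
Import Order.TTheory GRing.Theory.
Local Open Scope ring_scope.

Lemma big_regroup (V : nmodType) (T K : eqType) (s : seq T) (key : T -> K)
    (F : T -> V) :
  \sum_(t <- s) F t = \sum_(k <- undup (map key s)) \sum_(t <- s | key t == k) F t.
Proof.
rewrite [RHS](eq_bigr (fun k => \sum_(t <- s) if key t == k then F t else 0));
  last by move=> k _; rewrite big_mkcond.
rewrite exchange_big /=; apply: eq_big_seq => t ts; rewrite -big_mkcond /=.
rewrite big_const_seq (eq_count (a2 := pred1 (key t))); last first.
  by move=> k /=; rewrite eq_sym.
by rewrite count_uniq_mem ?undup_uniq // mem_undup map_f //= addr0.
Qed.

Section Words.
Variables (A : nzRingType) (n : nat) (x : 'I_n -> A).

Definition wprod (w : seq 'I_n) : A := \prod_(j <- w) x j.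

(* The sorted rearrangement of a word; sorted words are the standard monomials. *)
Definition normal (w : seq 'I_n) : seq 'I_n := sort <=%O w.

Definition expo (w : seq 'I_n) : {ffun 'I_n -> nat} := [ffun j => count_mem j w].
Definition word_of (al : {ffun 'I_n -> nat}) : seq 'I_n :=
  flatten [seq nseq (al j) j | j <- enum 'I_n].

Lemma wprod_nil : wprod [::] = 1. Proof. by rewrite /wprod big_nil. Qed.
Lemma wprod_cons i w : wprod (i :: w) = x i * wprod w.
Proof. by rewrite /wprod big_cons. Qed.
Lemma wprod_cat u v : wprod (u ++ v) = wprod u * wprod v.
Proof. by rewrite /wprod big_cat. Qed.

Lemma normal_sorted w : sorted <=%O (normal w). Proof. exact: sort_le_sorted. Qed.
Lemma size_normal w : size (normal w) = size w. Proof. exact: size_sort. Qed.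
Lemma expo_normal w : expo (normal w) = expo w.
Proof. by apply/ffunP => j; rewrite !ffunE (permP (permEl (perm_sort _ w))). Qed.
Lemma expo_cat u v : expo (u ++ v) = expo u + expo v.
Proof. by apply/ffunP => j; rewrite !ffunE count_cat. Qed.

Lemma monomial_word_of al : monomial x al = wprod (word_of al).
Proof.
rewrite /monomial /wprod /word_of big_flatten big_map /= enumT.
apply: eq_bigr => j _; elim: (al j) => [|m IH]; first by rewrite big_nil expr0.
by rewrite /= big_cons exprS IH.
Qed.

Lemma sorted_word_of al : sorted <=%O (word_of al).
Proof.
rewrite /word_of; have: sorted <%O (enum 'I_n).
  by have := iota_ltn_sorted 0 n; rewrite -val_enum_ord sorted_map.
elim: (enum 'I_n) => [|j L IH] //= hs.
have [lt_jL sL] : all (<%O j) L /\ sorted <%O L.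
  by move: hs; rewrite (path_sortedE lt_trans) => /andP.
have le_jL : all (<=%O j) (flatten [seq nseq (al k) k | k <- L]).
  apply/allP => y /flattenP [l /mapP [k kL ->] /nseqP [-> _]].
  by apply: ltW; move/allP: lt_jL; apply.
elim: (al j) => [|m IHm] /=; first exact: IH.
rewrite (path_sortedE le_trans) all_cat le_jL IHm !andbT.
by apply/allP => y /nseqP [->].
Qed.

Lemma expo_word_of al : expo (word_of al) = al.
Proof.
apply/ffunP => j; rewrite ffunE /word_of count_flatten -map_comp.
rewrite (eq_map (g := fun k => (k == j) * al k)%N); last first.
  by move=> k /=; rewrite count_nseq /= eq_sym.
rewrite sumnE big_map enumT -/(index_enum _) (bigD1 j) //= eqxx mul1n big1 ?addn0 //.
by move=> k /negbTE ->.
Qed.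

Lemma word_of_expo w : sorted <=%O w -> word_of (expo w) = w.
Proof.
move=> sw; apply: (sorted_eq le_trans le_anti (sorted_word_of _) sw).
apply/allP => y _; have /ffunP/(_ y) := expo_word_of (expo w).
by rewrite !ffunE /= => ->.
Qed.

End Words.

Section DegLex.
Variable n : nat.

Definition exp_lt (f g : {ffun 'I_n -> nat}) : Prop :=
  exists j : 'I_n, (forall k : 'I_n, (k < j)%N -> f k = g k) /\ (f j < g j)%N.

Lemma exp_lt_irr f : ~ exp_lt f f.
Proof. by case=> j [_]; rewrite ltnn. Qed.

Lemma exp_lt_trans f g h : exp_lt f g -> exp_lt g h -> exp_lt f h.
Proof.
move=> [j1 [e1 l1]] [j2 [e2 l2]]; case: (ltngtP j1 j2) => hj.
- exists j1; split; last by rewrite -(e2 j1 hj).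
  by move=> k hk; rewrite e1 // e2 // (ltn_trans hk hj).
- exists j2; split; last by rewrite (e1 j2 hj).
  by move=> k hk; rewrite e1 ?e2 // (ltn_trans hk hj).
- move/val_inj: hj => ?; subst j2.
  by exists j1; split=> [k hk|]; [rewrite e1 ?e2|apply: ltn_trans l2].
Qed.

Lemma exp_lt_total f g : f != g -> exp_lt f g \/ exp_lt g f.
Proof.
move=> hfg; have hex : exists m, [exists k : 'I_n, (val k == m) && (f k != g k)].
  have [/existsP [k hk]|] := boolP [exists k, f k != g k].
    by exists (val k); apply/existsP; exists k; rewrite eqxx hk.
  rewrite negb_exists => /forallP hall; case/negP: hfg; apply/eqP/ffunP => k.
  by have /negPn /eqP := hall k.
case: (ex_minnP hex) => m /existsP [k /andP [/eqP hk hne]] hmin.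
have hlow (j : 'I_n) : (j < k)%N -> f j = g j.
  move=> hj; apply/eqP; apply: contraTT hj => hj; rewrite -leqNgt hk.
  by apply: hmin; apply/existsP; exists j; rewrite eqxx hj.
case: (ltngtP (f k) (g k)) => h; [left|right|by move: hne; rewrite h eqxx].
  by exists k.
by exists k; split=> // j hj; rewrite hlow.
Qed.

Lemma exp_lt_add f f' g g' : exp_lt f f' -> g = g' \/ exp_lt g g' ->
  exp_lt (f + g) (f' + g').
Proof.
move=> [j1 [e1 l1]] [<-|[j2 [e2 l2]]].
  exists j1; split=> [k hk|]; first by rewrite !ffunE e1.
  by rewrite !ffunE ltn_add2r.
case: (ltngtP j1 j2) => hj.
- exists j1; split; last by rewrite !ffunE (e2 j1 hj) ltn_add2r.
  by move=> k hk; rewrite !ffunE e1 // e2 // (ltn_trans hk hj).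
- exists j2; split; last by rewrite !ffunE (e1 j2 hj) ltn_add2l.
  by move=> k hk; rewrite !ffunE e2 // e1 // (ltn_trans hk hj).
- move/val_inj: hj => ?; subst j2.
  exists j1; split=> [k hk|]; first by rewrite !ffunE e1 ?e2.
  by rewrite !ffunE -addSn leq_add // ltnW.
Qed.

Definition word_lt (u v : seq 'I_n) : Prop :=
  (size u < size v)%N \/ size u = size v /\ exp_lt (expo u) (expo v).
Definition word_le (u v : seq 'I_n) : Prop := u = v \/ word_lt u v.

Lemma word_lt_irr u : ~ word_lt u u.
Proof. by case=> [|[_ /exp_lt_irr //]]; rewrite ltnn. Qed.

Lemma word_lt_trans u v w : word_lt u v -> word_lt v w -> word_lt u w.
Proof.
move=> [h1|[h1 l1]] [h2|[h2 l2]].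
- by left; apply: ltn_trans h2.
- by left; rewrite -h2.
- by left; rewrite h1.
- by right; split; [rewrite h1 h2|apply: exp_lt_trans l2].
Qed.

Lemma word_le_size u v : word_le u v -> (size u <= size v)%N.
Proof. by case=> [->|[/ltnW|[->]]]. Qed.

Lemma word_lt_shorter w u m : (size w < size u)%N -> word_lt u m -> word_lt w m.
Proof. by move=> hw hu; left; apply: leq_trans hw (word_le_size (or_intror hu)). Qed.

Lemma word_lt_normal u m : word_lt (normal u) m <-> word_lt u m.
Proof. by rewrite /word_lt size_normal expo_normal. Qed.

Lemma word_lt_total u v : sorted <=%O u -> sorted <=%O v -> u != v ->
  word_lt u v \/ word_lt v u.
Proof.
move=> su sv huv; case: (ltngtP (size u) (size v)) => hs; [by left; left|by right; left|].
have /exp_lt_total [] : expo u != expo v.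
  by apply: contra huv => /eqP e; rewrite -(word_of_expo su) -(word_of_expo sv) e.
- by left; right.
- by right; right.
Qed.

Lemma word_lt_cat u' u v' v : word_le u' u -> word_le v' v ->
  word_lt u' u \/ word_lt v' v -> word_lt (u' ++ v') (normal (u ++ v)).
Proof.
move=> hu hv strict; rewrite /word_lt size_normal expo_normal !size_cat !expo_cat.
have su := word_le_size hu; have sv := word_le_size hv.
case: hu strict => [<-|[hu|[eu lu]]] strict.
- have [hv'|[ev lv]] : word_lt v' v by case: strict => // /word_lt_irr [].
    by left; rewrite ltn_add2l.
  right; split; first by rewrite ev.
  by rewrite addrC [expo u' + _]addrC; apply: exp_lt_add lv _; left.
- by left; rewrite -addSn leq_add.
case: hv => [<-|[hv|[ev lv]]].
- by right; split; [rewrite eu|apply: exp_lt_add lu _; left].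
- by left; rewrite -addnS leq_add.
by right; split; [rewrite eu ev|apply: exp_lt_add lu _; right].
Qed.

End DegLex.

Arguments word_lt {n} u v.
Arguments word_le {n} u v.

Section Combinations.
Variables (R A : nzRingType) (phi : {rmorphism R -> A}) (n : nat) (x : 'I_n -> A).

Definition combo (P : seq 'I_n -> Prop) (a : A) : Prop :=
  exists s : seq (R * seq 'I_n),
    a = \sum_(t <- s) phi t.1 * wprod x t.2 /\ forall t, t \in s -> P t.2.

Definition deg_lt (d : nat) : A -> Prop := combo (fun w => size w < d)%N.

Lemma combo0 P : combo P 0.
Proof. by exists [::]; rewrite big_nil. Qed.

Lemma combo_word (P : seq 'I_n -> Prop) r w : P w -> combo P (phi r * wprod x w).
Proof.
by move=> Pw; exists [:: (r, w)]; rewrite big_seq1; split=> // t; rewrite inE => /eqP ->.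
Qed.

Lemma combD P a b : combo P a -> combo P b -> combo P (a + b).
Proof.
move=> [s1 [-> h1]] [s2 [-> h2]]; exists (s1 ++ s2); rewrite big_cat; split => //.
by move=> t; rewrite mem_cat => /orP [/h1|/h2].
Qed.

Lemma combo_sum P (I : eqType) (r : seq I) (F : I -> A) :
  (forall i, i \in r -> combo P (F i)) -> combo P (\sum_(i <- r) F i).
Proof.
elim: r => [|i r IH] h; first by rewrite big_nil; apply: combo0.
rewrite big_cons; apply: combD; first by apply: h; rewrite mem_head.
by apply: IH => j jr; apply: h; rewrite in_cons jr orbT.
Qed.

Lemma combL P r a : combo P a -> combo P (phi r * a).
Proof.
move=> [s [-> h]]; exists [seq (r * t.1, t.2) | t <- s]; rewrite big_map mulr_sumr.
by split=> [|t /mapP [t' /h ? ->] //]; apply: eq_bigr => t _; rewrite rmorphM mulrA.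
Qed.

Lemma combo_impl (P Q : seq 'I_n -> Prop) a :
  (forall w, P w -> Q w) -> combo P a -> combo Q a.
Proof. by move=> hPQ [s [-> h]]; exists s; split=> // t /h; apply: hPQ. Qed.

Lemma combo_mulr_word (P Q : seq 'I_n -> Prop) a v :
  (forall u, P u -> Q (u ++ v)) -> combo P a -> combo Q (a * wprod x v).
Proof.
move=> hPQ [s [-> h]]; rewrite mulr_suml; apply: combo_sum => t /h Pt.
by rewrite -mulrA -wprod_cat; apply: combo_word; apply: hPQ.
Qed.

End Combinations.

Section SkewPBW.
Variables (R A : nzRingType) (phi : {rmorphism R -> A}) (n : nat) (x : 'I_n -> A).
Hypothesis HPBW : skew_PBW phi x.

Local Notation wprod := (wprod x).
Local Notation combo := (combo phi x).
Local Notation deg_lt := (deg_lt phi x).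

Lemma standard_span a :
  exists2 s : seq (R * seq 'I_n), (forall t, t \in s -> sorted <=%O t.2) &
    a = \sum_(t <- s) phi t.1 * wprod t.2.
Proof.
case: HPBW => _ hspan _ _ _; case: (hspan a) => s [c ->].
exists [seq (c al, word_of al) | al <- s].
  by move=> t /mapP [al _ ->]; apply: sorted_word_of.
by rewrite big_map; apply: eq_bigr => al _; rewrite monomial_word_of.
Qed.

Lemma standard_free (s : seq (R * seq 'I_n)) :
  (forall t, t \in s -> sorted <=%O t.2) -> \sum_(t <- s) phi t.1 * wprod t.2 = 0 ->
  forall w, sorted <=%O w -> \sum_(t <- s | t.2 == w) t.1 = 0.
Proof.
case: HPBW => _ _ hind _ _ hs hsum w hw.
pose c al := \sum_(t <- s | expo t.2 == al) t.1.
have hzero := hind (undup [seq expo t.2 | t <- s]) c (undup_uniq _).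
have -> : \sum_(t <- s | t.2 == w) t.1 = c (expo w).
  rewrite /c big_seq_cond [RHS]big_seq_cond; apply: eq_bigl => t.
  case ts: (t \in s) => //=.
  by apply/eqP/eqP => [-> //|e]; rewrite -(word_of_expo (hs t ts)) e word_of_expo.
case cu: (expo w \in undup [seq expo t.2 | t <- s]); last first.
  rewrite /c big1_seq // => t /andP[/eqP e ts]; move/negbT: cu.
  by rewrite mem_undup -e (map_f (fun t : R * seq 'I_n => expo t.2) ts).
apply: hzero cu; rewrite -[RHS]hsum [RHS](big_regroup _ (fun t => expo t.2)).
apply: eq_bigr => al _; rewrite rmorph_sum mulr_suml big_seq_cond [RHS]big_seq_cond.
apply: eq_bigr => t /andP[ts /eqP <-].
by rewrite monomial_word_of word_of_expo //; apply: hs.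
Qed.

Lemma x_sub_scalar_neq0 i z : x i - phi z != 0.
Proof.
apply/eqP => h; pose s := [:: (1, [:: i]); (- z, [::])].
have sorted_s : forall t, t \in s -> sorted <=%O t.2.
  by move=> t; rewrite !inE => /orP [] /eqP ->.
have hs : \sum_(t <- s) phi t.1 * wprod t.2 = 0.
  by rewrite !big_cons big_nil rmorph1 rmorphN wprod_cons wprod_nil !mulr1 mul1r addr0.
have := standard_free sorted_s hs (w := [:: i]) isT.
by rewrite !big_cons big_nil /= eqxx addr0 => /eqP; rewrite oner_eq0.
Qed.

Lemma x_scalar i r : exists s d, x i * phi r = phi s * x i + phi d /\ (r != 0 -> s != 0).
Proof.
case: HPBW => _ _ _ h3 _; have [->|hr] := eqVneq r 0.
  by exists 0, 0; rewrite !rmorph0 mulr0 mul0r addr0.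
have [c [hc [d e]]] := h3 i r hr.
by exists c, d; split => //; rewrite -e addrC subrK.
Qed.

Lemma x_swap i j : exists c, c != 0 /\
  exists2 E, deg_lt 2 E & x i * x j = phi c * x j * x i + E.
Proof.
case: HPBW => _ _ _ _ h4; have [c [hc [d0 [d e]]]] := h4 j i.
exists c; split => //; exists (phi d0 + \sum_(k < n) phi (d k) * x k).
  apply: combD; first by rewrite -[phi d0]mulr1 -(@wprod_nil _ _ x); apply: combo_word.
  apply: combo_sum => k _; rewrite -[x k]mulr1 -(@wprod_nil _ _ x) -wprod_cons.
  exact: combo_word.
by rewrite -e addrC subrK.
Qed.

Lemma x_mul_deg i d a : deg_lt d a -> deg_lt d.+1 (x i * a).
Proof.
case=> s [-> hs]; rewrite mulr_sumr; apply: combo_sum => t /hs st.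
have [r [e [ex _]]] := x_scalar i t.1.
rewrite mulrA ex mulrDl -mulrA -wprod_cons.
by apply: combD; apply: combo_word => //=; apply: ltnW.
Qed.

Lemma word_scalar w r : exists s, (r != 0 -> s != 0) /\
  exists2 l, deg_lt (size w) l & wprod w * phi r = phi s * wprod w + l.
Proof.
elim: w r => [|i w IH] r.
  by exists r; split=> //; exists 0; [apply: combo0|rewrite wprod_nil mul1r mulr1 addr0].
have [s [hs [l hl e]]] := IH r; have [s' [d [e' hs']]] := x_scalar i s.
exists s'; split; first by move=> /hs /hs'.
exists (phi d * wprod w + x i * l).
  by apply: combD; [apply: combo_word|apply: x_mul_deg].
by rewrite !wprod_cons -mulrA e mulrDr mulrA e' mulrDl -mulrA addrA.
Qed.

Hypothesis domR : is_domain R.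

Lemma mulR_neq0 (a b : R) : a != 0 -> b != 0 -> a * b != 0.
Proof.
by move=> /negPf ha /negPf hb; apply/eqP => /domR [/eqP|/eqP]; rewrite ?ha ?hb.
Qed.

Lemma insert_letter i v : sorted <=%O v -> exists c, c != 0 /\
  exists2 l, deg_lt (size v).+1 l &
    x i * wprod v = phi c * wprod (normal (i :: v)) + l.
Proof.
have already_sorted u : sorted <=%O (i :: u) ->
    x i * wprod u = phi 1 * wprod (normal (i :: u)) + 0.
  move=> siu; rewrite rmorph1 mul1r addr0.
  by rewrite /normal (sorted_sort le_trans siu) wprod_cons.
elim: v => [|j v IH] sv.
  by exists 1; split; [exact: oner_neq0|exists 0; [apply: combo0|apply: already_sorted]].
have [siv|] := boolP (sorted <=%O (i :: j :: v)).
  by exists 1; split; [exact: oner_neq0|exists 0; [apply: combo0|apply: already_sorted]].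
move=> unsorted; have le_ji : (j <= i)%O.
  by rewrite leNgt; apply: contra unsorted => /ltW le_ij; rewrite /= le_ij.
have [le_jv sv'] : all (<=%O j) v /\ sorted <=%O v.
  by move: sv; rewrite /= (path_sortedE le_trans) => /andP.
have normal_swap : normal (i :: j :: v) = j :: normal (i :: v).
  apply: (sorted_eq le_trans le_anti); first exact: normal_sorted.
    rewrite /= (path_sortedE le_trans) normal_sorted andbT.
    by apply/allP => y; rewrite mem_sort inE => /orP [/eqP ->|/(allP le_jv)].
  rewrite /normal perm_sort (perm_catCA [:: i] [:: j] v) /=.
  by rewrite perm_cons perm_sym perm_sort.
have [c' [hc' [l' hl' eIH]]] := IH sv'.
have [c [hc [E hE e4]]] := x_swap i j.
have [s [dd [e3 hs]]] := x_scalar j c'.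
exists (c * s); split; first exact: mulR_neq0 (hs hc').
exists (phi (c * dd) * wprod (normal (i :: v)) + phi c * (x j * l') + E * wprod v).
  apply: combD; first apply: combD.
  - by apply: combo_word; rewrite size_normal.
  - by apply: combL; apply: x_mul_deg.
  - by apply: combo_mulr_word hE => u su; rewrite size_cat /= -addn2 addnC ltn_add2l.
rewrite normal_swap !wprod_cons mulrA e4 mulrDl -(mulrA _ (x i)) eIH mulrDr.
rewrite -!mulrA [x j * (phi c' * _)]mulrA e3 mulrDl !mulrDr !rmorphM !mulrA.
by rewrite -!addrA.
Qed.

(* Every word equals a nonzero multiple of its sorted rearrangement, up to
   terms of lower degree (insertion sort). *)
Lemma reorder w : exists k, k != 0 /\
  exists2 l, deg_lt (size w) l & wprod w = phi k * wprod (normal w) + l.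
Proof.
elim: w => [|i w [k [hk [l hl e]]]].
  exists 1; split; first exact: oner_neq0.
  by exists 0; [apply: combo0|rewrite rmorph1 mul1r addr0].
have [s [d [e3 hs]]] := x_scalar i k.
have [c [hc [l' hl' e']]] := insert_letter i (normal_sorted w).
have normal_cons : normal (i :: normal w) = normal (i :: w).
  apply/(perm_sortP le_total le_trans le_anti).
  by rewrite perm_cons perm_sort.
exists (s * c); split; first exact: mulR_neq0 (hs hk) hc.
exists (phi s * l' + phi d * wprod (normal w) + x i * l).
  apply: combD; first apply: combD.
  - by apply: combL; rewrite /= -(size_normal w).
  - by apply: combo_word; rewrite /= size_normal.
  - exact: x_mul_deg.
rewrite wprod_cons e mulrDr mulrA e3 mulrDl -mulrA e' -normal_cons.
by rewrite mulrDr mulrA -rmorphM !addrA.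
Qed.

Lemma word_product u r v : exists k, (r != 0 -> k != 0) /\
  exists2 l, deg_lt (size u + size v) l &
    wprod u * phi r * wprod v = phi k * wprod (normal (u ++ v)) + l.
Proof.
have [s [hs [l1 hl1 e1]]] := word_scalar u r.
have [k [hk [l2 hl2 e2]]] := reorder (u ++ v).
exists (s * k); split; first by move=> /hs hs'; apply: mulR_neq0.
exists (phi s * l2 + l1 * wprod v).
  apply: combD; first by apply: combL; rewrite -size_cat.
  by apply: combo_mulr_word hl1 => u' su'; rewrite size_cat ltn_add2r.
by rewrite e1 mulrDl -mulrA -wprod_cat e2 mulrDr mulrA -rmorphM addrA.
Qed.

Lemma standardize (P : seq 'I_n -> Prop) a :
  (forall w, P w -> P (normal w)) ->
  (forall w w', P w -> (size w' < size w)%N -> P w') ->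
  combo P a -> combo (fun w => sorted <=%O w /\ P w) a.
Proof.
move=> P_normal P_shorter.
have term d w r : (size w < d)%N -> P w ->
    combo (fun w => sorted <=%O w /\ P w) (phi r * wprod w).
  elim: d w r => [|d IH] w r sw Pw; first by rewrite ltn0 in sw.
  have [k [_ [l [s [-> hs]] ->]]] := reorder w.
  rewrite mulrDr mulrA -rmorphM; apply: combD.
    by apply: combo_word; split; [apply: normal_sorted|apply: P_normal].
  rewrite mulr_sumr; apply: combo_sum => t /hs st; rewrite mulrA -rmorphM.
  by apply: IH; [apply: leq_trans st _|apply: P_shorter st].
by case=> s [-> hs]; apply: combo_sum => t /hs Pt; apply: term (ltnSn _) Pt.
Qed.

Lemma combo_mul_below (P Q : seq 'I_n -> Prop) m a b : combo P a -> combo Q b ->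
  (forall u v, P u -> Q v -> word_lt (u ++ v) m) -> combo (word_lt^~ m) (a * b).
Proof.
move=> [s1 [-> h1]] [s2 [-> h2]] below; rewrite mulr_suml; apply: combo_sum => t /h1 Pu.
rewrite mulr_sumr; apply: combo_sum => t' /h2 Qv.
have [s [_ [l hl e]]] := word_scalar t.2 t'.1.
rewrite mulrA -(mulrA _ (wprod t.2)) e mulrDr mulrDl mulrA -rmorphM -mulrA -wprod_cat.
apply: combD; first exact/combo_word/below.
rewrite -mulrA; apply: combL; apply: combo_mulr_word hl => u su.
by apply: word_lt_shorter (below _ _ Pu Qv); rewrite !size_cat ltn_add2r.
Qed.

Definition leading (a : A) (k : R) (w : seq 'I_n) : Prop :=
  [/\ sorted <=%O w, k != 0 &
      exists2 l, combo (word_lt^~ w) l & a = phi k * wprod w + l].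

(* An element with a leading term is nonzero: rewritten in the standard basis,
   its coefficient on the leading word is k. *)
Lemma leading_neq0 a k w : leading a k w -> a != 0.
Proof.
case=> sw hk [l hl ->]; apply/eqP => h0.
have [s [el hs]] : combo (fun v => sorted <=%O v /\ word_lt v w) l.
  apply: standardize hl => [v hv|v v' hv hv']; first exact/word_lt_normal.
  exact: word_lt_shorter hv' hv.
have hsum : \sum_(t <- (k, w) :: s) phi t.1 * wprod t.2 = 0 by rewrite big_cons -el.
have sorted_s : forall t, t \in (k, w) :: s -> sorted <=%O t.2.
  by move=> t; rewrite inE => /orP [/eqP -> //|/hs []].
have := standard_free sorted_s hsum sw.
rewrite big_cons /= eqxx big1_seq ?addr0 => [/eqP|t /andP [/eqP e /hs [_]]].
  by rewrite (negbTE hk).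
by rewrite e => /word_lt_irr.
Qed.

Lemma word_max (L : seq (seq 'I_n)) :
  (forall w, w \in L -> sorted <=%O w) -> L != [::] ->
  exists2 m, m \in L & forall w, w \in L -> word_le w m.
Proof.
elim: L => [|w L IH] // hs _.
have sw : sorted <=%O w by apply: hs; rewrite mem_head.
have [->|hL] := eqVneq L [::].
  by exists w; rewrite ?mem_head // => w'; rewrite inE => /eqP ->; left.
have sL w' : w' \in L -> sorted <=%O w' by move=> h; apply: hs; rewrite inE h orbT.
have [m mL hm] := IH sL hL.
have sm : sorted <=%O m by apply: hs; rewrite inE mL orbT.
have [e_wm|hne] := eqVneq w m.
  exists m; first by rewrite inE mL orbT.
  by move=> w'; rewrite inE => /orP [/eqP ->|/hm]; [left|].
have [lt_wm|lt_mw] := word_lt_total sw sm hne.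
  exists m; first by rewrite inE mL orbT.
  by move=> w'; rewrite inE => /orP [/eqP ->|/hm]; [right|].
exists w; first by rewrite mem_head.
move=> w'; rewrite inE => /orP [/eqP ->|/hm [->|lt_w'm]]; [by left|by right|].
by right; apply: word_lt_trans lt_mw.
Qed.

Lemma leading_exists a : a != 0 -> exists k w, leading a k w.
Proof.
move=> ha; have [s hs ea] := standard_span a.
pose coef w := \sum_(t <- s | t.2 == w) t.1.
pose W := [seq w <- undup [seq t.2 | t <- s] | coef w != 0].
have eW : a = \sum_(w <- W) phi (coef w) * wprod w.
  have -> : a = \sum_(w <- undup [seq t.2 | t <- s]) phi (coef w) * wprod w.
    rewrite ea (big_regroup _ (fun t => t.2)); apply: eq_bigr => w _.
    by rewrite rmorph_sum mulr_suml; apply: eq_bigr => t /eqP ->.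
  rewrite big_filter [RHS]big_mkcond; apply: eq_bigr => w _.
  by case: eqP => [->|] /=; rewrite ?rmorph0 ?mul0r.
have sW w : w \in W -> sorted <=%O w.
  by rewrite mem_filter mem_undup => /andP [_ /mapP [t ts ->]]; apply: hs.
have [hW|hW] := eqVneq W [::]; first by move: ha; rewrite eW hW big_nil eqxx.
have [m mW hm] := word_max sW hW.
exists (coef m), m; split; first exact: sW.
  by move: mW; rewrite mem_filter => /andP [].
exists (\sum_(w <- W | w != m) phi (coef w) * wprod w).
  rewrite -big_filter; apply: combo_sum => w; rewrite mem_filter => /andP [hne wW].
  by apply: combo_word; case: (hm w wW) => // e; rewrite e eqxx in hne.
by rewrite eW (bigD1_seq m) // filter_uniq // undup_uniq.
Qed.

Lemma leading_mul f g k1 k2 u v : leading f k1 u -> leading g k2 v ->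
  exists k, leading (f * g) k (normal (u ++ v)).
Proof.
case=> su hk1 [l1 hl1 ef] [sv hk2 [l2 hl2 eg]].
have [k [hk [l0 hl0 e0]]] := word_product u k2 v.
have hg : combo (word_le^~ v) g.
  rewrite eg; apply: combD; first by apply: combo_word; left.
  by apply: combo_impl hl2 => w; right.
exists (k1 * k); split; first exact: normal_sorted.
  exact: mulR_neq0 hk1 (hk hk2).
exists (phi k1 * l0 + (phi k1 * wprod u * l2 + l1 * g)).
  apply: combD; last apply: combD.
  - apply: combL; apply: combo_impl hl0 => w sw'.
    by left; rewrite size_normal size_cat.
  - apply: (combo_mul_below (P := eq^~ u) (Q := word_lt^~ v)) => [|//|u' v' <- hv'].
      exact: combo_word.
    by apply: word_lt_cat; [left|right|right].
  - apply: combo_mul_below hl1 hg _ => u' v' hu' hv'.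
    by apply: word_lt_cat; [right|done|left].
have main : phi k1 * wprod u * (phi k2 * wprod v) =
    phi (k1 * k) * wprod (normal (u ++ v)) + phi k1 * l0.
  by rewrite -!mulrA (mulrA (wprod u)) e0 mulrDr mulrA -rmorphM.
by rewrite ef mulrDl {1}eg mulrDr main !addrA.
Qed.

Lemma skew_PBW_domain (f g : A) : f != 0 -> g != 0 -> f * g != 0.
Proof.
move=> /leading_exists [k1 [u h1]] /leading_exists [k2 [v h2]].
by have [k /leading_neq0] := leading_mul h1 h2.
Qed.

End SkewPBW.

Section ZariskiTopology.
Variables (R A : nzRingType) (phi : {rmorphism R -> A}) (n : nat) (x : 'I_n -> A).

Local Notation algebraic := (algebraic phi x).

Lemma ideal_pt_mulr Z (f g : A) : in_ideal_pt phi x Z f -> in_ideal_pt phi x Z (f * g).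
Proof.
case=> s ->; exists [seq (t.1, t.2 * g) | t <- s]; rewrite big_map mulr_suml.
by apply: eq_bigr => t _ /=; rewrite mulrA.
Qed.

Lemma ideal_pt_mull Z (f g : A) : in_ideal_pt phi x Z f -> in_ideal_pt phi x Z (g * f).
Proof.
case=> s ->; exists [seq ((t.1.1, g * t.1.2), t.2) | t <- s]; rewrite big_map mulr_sumr.
by apply: eq_bigr => t _ /=; rewrite !mulrA.
Qed.

Lemma ideal_pt_gen Z i : in_ideal_pt phi x Z (x i - phi (Z i)).
Proof. by exists [:: ((i, 1), 1)]; rewrite big_seq1 /= mul1r mulr1. Qed.

Lemma algebraic_ext (X Y : ('I_n -> R) -> Prop) :
  (forall Z, X Z <-> Y Z) -> algebraic Y -> algebraic X.
Proof.
move=> e [h|[g [hg h]]]; first by left => Z; apply/e.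
by right; exists g; split => // Z /e; apply: h.
Qed.

Lemma algebraic_empty : algebraic (fun _ => False).
Proof. by right; exists 1; split => //; exact: oner_neq0. Qed.

(* In a domain, V(g1) U V(g2) is contained in V(g1 g2). *)
Lemma algebraic_union X Y :
  (forall f g : A, f != 0 -> g != 0 -> f * g != 0) ->
  algebraic X -> algebraic Y -> algebraic (fun Z => X Z \/ Y Z).
Proof.
move=> dom [hX|[g1 [h1 VX]]]; first by left => Z; left.
move=> [hY|[g2 [h2 VY]]]; first by left => Z; right.
right; exists (g1 * g2); split; first exact: dom.
by move=> Z [/VX|/VY]; [apply: ideal_pt_mulr|apply: ideal_pt_mull].
Qed.

(* An intersection is contained in any of its members. *)
Lemma algebraic_bigcap (I : Type) (F : I -> ('I_n -> R) -> Prop) :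
  (forall k, algebraic (F k)) -> algebraic (fun Z => forall k, F k Z).
Proof.
move=> hF; have [all_full|] := classic (forall k Z, F k Z); first by left => Z k.
move=> /not_all_ex_not [k hk]; have [//|[g [hg VF]]] := hF k.
by right; exists g; split=> // Z /(_ k); apply: VF.
Qed.

(* A point Z0 lies in V(x_0 - z_0) (or R^n is itself a point when n = 0). *)
Lemma algebraic_point (HPBW : skew_PBW phi x) Z0 : algebraic (fun Z => Z0 = Z).
Proof.
have [n0|n_gt0] := posnP n.
  left => Z; apply: functional_extensionality => i.
  by have := ltn_ord i; rewrite {2}n0.
right; exists (x (Ordinal n_gt0) - phi (Z0 (Ordinal n_gt0))); split.
  exact: x_sub_scalar_neq0.
by move=> Z <-; apply: ideal_pt_gen.
Qed.

Lemma algebraic_finite (HPBW : skew_PBW phi x) X :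
  (forall f g : A, f != 0 -> g != 0 -> f * g != 0) ->
  finite_pts X -> algebraic X.
Proof.
move=> dom [s hs]; apply: (algebraic_ext hs).
elim: s {hs} => [|Z0 s IH] /=; first exact: algebraic_empty.
exact: algebraic_union dom (algebraic_point HPBW Z0) IH.
Qed.

End ZariskiTopology.

Theorem corollary4p5 (R A : nzRingType) (phi : {rmorphism R -> A}) (n : nat)
  (x : 'I_n -> A) :
  is_domain R -> left_noetherian R -> bijective_skew_PBW phi x ->
  (* (i) algebraic sets are the closed sets of a topology on R^n *)
  [/\ algebraic phi x (fun _ : 'I_n -> R => False),
      algebraic phi x (fun _ : 'I_n -> R => True),
      (forall X Y : ('I_n -> R) -> Prop,
          algebraic phi x X -> algebraic phi x Y ->
          algebraic phi x (fun Z => X Z \/ Y Z))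
    & (forall (I : Type) (F : I -> ('I_n -> R) -> Prop),
          (forall k, algebraic phi x (F k)) ->
          algebraic phi x (fun Z => forall k, F k Z))]
  /\
  (* (ii) every finite subset of R^n is algebraic *)
  (forall X : ('I_n -> R) -> Prop,
      finite_pts X ->
      algebraic phi x X).
Proof.
move=> domR _ [HPBW _ _].
have dom := skew_PBW_domain HPBW domR.
split; first split.
- exact: algebraic_empty.
- by left.
- by move=> X Y; apply: algebraic_union.
- exact: algebraic_bigcap.
- by move=> X; apply: algebraic_finite.
Qed.
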